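(* Let $k$ be a positive integer. Every $2^k$-$T_0T^\ast$-perfect number $n>1$ has the form $p_1^{2^{k+1}-1}$ for some prime $p_1$.
   Context: For a positive integer $m$, $T(m)$ denotes the product of all positive divisors of $m$, and $T^\ast(m)$ the product of all unitary divisors of $m$ (divisors $d$ with $\gcd(d,m/d)=1$). For an integer $K\ge 2$, an integer $n>1$ is called $K$-$T_0T^\ast$-perfect if $T(T^\ast(n))=n^K$. *)

From mathcomp Require Import all_boot.
Set Implicit Arguments. Unset Strict Implicit. Unset Printing Implicit Defensive.

Definition T (m : nat) : nat := \prod_(d <- divisors m) d.

Definition Tstar (m : nat) : nat :=
  \prod_(d <- divisors m | coprime d (m %/ d)) d.

Definition KT0Tstar_perfect (K n : nat) : Prop :=
  2 <= K /\ 1 < n /\ T (Tstar n) = n ^ K.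

From mathcomp Require Import all_boot.
Set Implicit Arguments. Unset Strict Implicit. Unset Printing Implicit Defensive.

(* Pairing each divisor d of m with m/d gives T(m)^2 = m^tau(m), and in the
   same way T*(n)^2 = n^u, where u is the number of unitary divisors of n.
   Hence T(T*(n))^4 = n^(u tau(T*(n))), and perfection forces
   u tau(T*(n)) = 2^(k+2): both factors are powers of 2.  If p^a exactly
   divides n, then p^e with e = ua/2 exactly divides T*(n), and e+1 divides
   tau(T*(n)), so e is odd; since u >= 2 is a power of 2, this forces u = 2,
   i.e. n = p^a.  Then T*(n) = n and tau(n) = a+1 = 2^(k+1). *)

Lemma divnK_divisor n d : 0 < n -> d %| n -> n %/ (n %/ d) = d.
Proof. by move=> n_gt0 dvd_dn; rewrite divnA // mulKn. Qed.

Lemma prod_divisors_sym_sqr n (P : pred nat) : 0 < n ->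
  (forall d, d %| n -> P (n %/ d) = P d) ->
  (\prod_(d <- divisors n | P d) d) ^ 2 = n ^ count P (divisors n).
Proof.
move=> n_gt0 symP; set s := filter P (divisors n).
have mem_s d : (d \in s) = (d %| n) && P d.
  by rewrite mem_filter -dvdn_divisors // andbC.
have perm_cod : perm_eq s (map (fun d => n %/ d) s).
  rewrite perm_sym; apply: uniq_perm; rewrite ?filter_uniq ?divisors_uniq //.
    rewrite map_inj_in_uniq ?filter_uniq ?divisors_uniq // => d d'.
    rewrite !mem_s => /andP[dvd_dn _] /andP[dvd_d'n _] eq_cod.
    by rewrite -(divnK_divisor n_gt0 dvd_dn) eq_cod divnK_divisor.
  move=> d; apply/mapP/idP => [[d' + ->]|].
    by rewrite !mem_s => /andP[dvd_d'n Pd']; rewrite dvdn_div // symP.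
  rewrite mem_s => /andP[dvd_dn Pd]; exists (n %/ d); last first.
    by rewrite divnK_divisor.
  by rewrite mem_s dvdn_div // symP.
rewrite -big_filter -/s expnS expn1 {2}(perm_big _ perm_cod) big_map.
rewrite -big_split (eq_big_seq (fun _ => n)) => [|d]; last first.
  by rewrite mem_s => /andP[dvd_dn _]; rewrite /= mulnC divnK.
by rewrite big_const_seq count_predT size_filter iter_muln_1.
Qed.

Lemma T_sqr m : 0 < m -> T m ^ 2 = m ^ size (divisors m).
Proof.
by move=> m_gt0; rewrite -count_predT -(@prod_divisors_sym_sqr m xpredT).
Qed.

Definition unitary n d := coprime d (n %/ d).

Lemma Tstar_sqr n : 0 < n -> Tstar n ^ 2 = n ^ count (unitary n) (divisors n).
Proof.
move=> n_gt0; apply: prod_divisors_sym_sqr => // d dvd_dn.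
by rewrite /unitary divnK_divisor // coprime_sym.
Qed.

Lemma Tstar_gt0 n : 0 < Tstar n.
Proof.
rewrite /Tstar big_seq_cond prodn_cond_gt0 // => d /andP[d_div _].
(* [divisors 0] evaluates to [:: 1]. *)
case: (posnP n) d_div => [-> /=|n_gt0]; first by rewrite inE => /eqP ->.
by rewrite -dvdn_divisors //; apply: dvdn_gt0.
Qed.

Lemma size_divisors_pfactor p a : prime p -> size (divisors (p ^ a)) = a.+1.
Proof.
move=> p_pr; have pa_gt0 : 0 < p ^ a by rewrite expn_gt0 prime_gt0.
suff /perm_size-> : perm_eq (divisors (p ^ a)) (map (expn p) (iota 0 a.+1)).
  by rewrite size_map size_iota.
apply: uniq_perm; rewrite ?divisors_uniq ?map_inj_uniq ?iota_uniq //.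
  exact/expnI/prime_gt1.
move=> d; rewrite -dvdn_divisors //; apply/(dvdn_pfactor _ _ p_pr)/mapP.
  by case=> i i_le_a ->; exists i; rewrite // mem_iota.
by case=> i; rewrite mem_iota => i_le_a ->; exists i.
Qed.

Lemma gcdn_coprime_mulE a b d : coprime a b -> d %| a * b ->
  d = gcdn d a * gcdn d b.
Proof.
move=> coab dvd_dab; apply/eqP; rewrite eqn_dvd Gauss_dvd; last first.
  exact: coprime_dvdl (dvdn_gcdr d a) (coprime_dvdr (dvdn_gcdr d b) coab).
have dvd_d_gcd_b : d %| gcdn a d * b.
  by rewrite muln_gcdl dvdn_gcd dvd_dab dvdn_mulr.
rewrite !dvdn_gcdl andbT [gcdn d a]gcdnC [gcdn d b]gcdnC muln_gcdr dvdn_gcd.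
by rewrite dvd_d_gcd_b dvdn_mull.
Qed.

Lemma size_divisors_coprime_mul a b : 0 < a -> 0 < b -> coprime a b ->
  size (divisors (a * b)) = size (divisors a) * size (divisors b).
Proof.
move=> a_gt0 b_gt0 coab; have ab_gt0 : 0 < a * b by rewrite muln_gt0 a_gt0.
suff /perm_size-> : perm_eq (divisors (a * b))
    [seq x * y | x <- divisors a, y <- divisors b] by rewrite size_allpairs.
apply: uniq_perm; rewrite ?divisors_uniq //.
  rewrite allpairs_uniq ?divisors_uniq // => -[? ?] [? ?].
  move=> /allpairsP[[x1 y1] /= [x1a y1b [-> ->]]].
  move=> /allpairsP[[x2 y2] /= [x2a y2b [-> ->]]] /= eq_xy.
  rewrite -!dvdn_divisors // in x1a y1b x2a y2b.
  have eq_x : x1 = x2.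
    rewrite -(gcdn_idPr x1a) -(gcdn_idPr x2a).
    rewrite -(Gauss_gcdl x1 (coprime_dvdr y1b coab)).
    by rewrite -(Gauss_gcdl x2 (coprime_dvdr y2b coab)) eq_xy.
  rewrite -eq_x in eq_xy *; congr pair; apply/eqP.
  by rewrite -(eqn_pmul2l (dvdn_gt0 a_gt0 x1a)) eq_xy.
move=> d; rewrite -dvdn_divisors //; apply/idP/allpairsP => [dvd_dab|].
  exists (gcdn d a, gcdn d b); rewrite -!dvdn_divisors ?dvdn_gcdr //.
  by split=> //; apply: gcdn_coprime_mulE.
by case=> -[x y] /= [+ + ->]; rewrite -!dvdn_divisors //; apply: dvdn_mul.
Qed.

Lemma logn_succ_dvd_size_divisors p m : prime p -> 0 < m ->
  (logn p m).+1 %| size (divisors m).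
Proof.
move=> p_pr m_gt0; rewrite -{2}(partnC p m_gt0).
rewrite size_divisors_coprime_mul ?part_gt0 ?coprime_partC //.
by rewrite p_part size_divisors_pfactor // dvdn_mulr.
Qed.

Lemma unitary_size_le_count n (s : seq nat) : 0 < n -> uniq s ->
  (forall d, d \in s -> d %| n /\ unitary n d) ->
  size s <= count (unitary n) (divisors n).
Proof.
move=> n_gt0 s_uniq s_unitary; rewrite -size_filter.
apply: uniq_leq_size => // d.
by case/s_unitary => dvd_dn unit_d; rewrite mem_filter unit_d -dvdn_divisors.
Qed.

Lemma unitary1 n : unitary n 1.
Proof. exact: coprime1n. Qed.

Lemma unitary_id n : 0 < n -> unitary n n.
Proof. by move=> n_gt0; rewrite /unitary divnn n_gt0 coprimen1. Qed.

Lemma count_unitary_gt1 n : 1 < n -> 1 < count (unitary n) (divisors n).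
Proof.
move=> n_gt1; have n_gt0 := ltnW n_gt1.
apply: (@unitary_size_le_count n [:: 1; n]) => //=.
  by rewrite inE neq_ltn n_gt1.
move=> d; rewrite !inE => /orP[] /eqP ->; split; rewrite ?dvd1n ?unitary1 //.
exact: unitary_id.
Qed.

Lemma count_unitary_le2_pfactor n p : p \in primes n ->
  count (unitary n) (divisors n) <= 2 -> n = p ^ logn p n.
Proof.
move=> p_in count_le2.
have /and3P[p_pr n_gt0 _] : [&& prime p, 0 < n & p %| n] by rewrite -mem_primes.
rewrite -p_part -{1}(partnC p n_gt0); apply/eqP; rewrite -{2}(muln1 n`_p).
rewrite eqn_pmul2l ?part_gt0 // eqn_leq part_gt0 andbT leqNgt.
apply/negP => np'_gt1.
have np_gt1 : 1 < n`_p.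
  by rewrite p_part -(expn0 p) ltn_exp2l ?prime_gt1 ?logn_gt0.
have np_lt_n : n`_p < n.
  by rewrite -{2}(partnC p n_gt0) -{1}(muln1 n`_p) ltn_pmul2l ?part_gt0.
suff : size [:: 1; n`_p; n] <= count (unitary n) (divisors n).
  by rewrite leqNgt ltnS count_le2.
apply: unitary_size_le_count => //=.
  by rewrite !inE !negb_or !neq_ltn np_gt1 (ltn_trans np_gt1) ?np_lt_n ?orbT.
move=> d; rewrite !inE => /or3P[] /eqP ->; split; rewrite ?dvd1n ?unitary1 //.
- exact: dvdn_part.
- by rewrite /unitary -{2}(partnC p n_gt0) mulKn ?part_gt0 ?coprime_partC.
- exact: unitary_id.
Qed.

Lemma odd_of_succ_dvd_pow2 e m : 0 < e -> e.+1 %| 2 ^ m -> odd e.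
Proof.
move=> e_gt0 /(dvdn_pfactor _ _ (isT : prime 2))[[|j] _ eq_e].
  by move: eq_e e_gt0; rewrite expn0 => -[->].
by move: (oddS e); rewrite eq_e expnS oddM => /esym/negbFE.
Qed.

Lemma dvdn_pow2_eq2 u a m : 1 < u -> u %| 2 ^ m -> odd (u * a)./2 -> u = 2.
Proof.
move=> u_gt1 /(dvdn_pfactor _ _ (isT : prime 2))[[|[|i]] _ eq_u] //.
  by rewrite eq_u in u_gt1.
by rewrite eq_u expnS -mulnA mul2n half_double expnS -mulnA oddM.
Qed.

Lemma KT0Tstar_perfect_count_mul_size K n : KT0Tstar_perfect K n ->
  count (unitary n) (divisors n) * size (divisors (Tstar n)) = 4 * K.
Proof.
move=> [_ [n_gt1 TTstar_eq]]; apply: (expnI n_gt1).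
rewrite expnM -Tstar_sqr ?(ltnW n_gt1) // -expnM mulnC expnM.
by rewrite -T_sqr ?Tstar_gt0 // TTstar_eq -!expnM mulnC.
Qed.

Theorem mainTheorem10 (k n : nat) :
  0 < k -> 1 < n -> KT0Tstar_perfect (2 ^ k) n ->
  exists p : nat, prime p /\ n = p ^ (2 ^ k.+1 - 1).
Proof.
move=> _ n_gt1 perfect_n.
set M := Tstar n; set u := count (unitary n) (divisors n).
have count_size : u * size (divisors M) = 2 ^ k.+2.
  by rewrite (KT0Tstar_perfect_count_mul_size perfect_n) !expnS mulnA.
have M_sqr : M ^ 2 = n ^ u by apply/Tstar_sqr/ltnW.
have p_in : pdiv n \in primes n by rewrite pi_pdiv.
set p := pdiv n; have p_pr : prime p by apply: pdiv_prime.
set a := logn p n; have a_gt0 : 0 < a by rewrite logn_gt0.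
have logn_M : logn p M * 2 = u * a by rewrite mulnC -lognX M_sqr lognX.
have u_eq2 : u = 2.
  apply: (@dvdn_pow2_eq2 _ a k.+2 (count_unitary_gt1 n_gt1)).
    by rewrite -count_size dvdn_mulr.
  rewrite -logn_M muln2 half_double; apply: (@odd_of_succ_dvd_pow2 _ k.+2).
    rewrite -(ltn_pmul2r (isT : 0 < 2)) logn_M muln_gt0 a_gt0 andbT.
    exact/ltnW/count_unitary_gt1.
  by rewrite -count_size dvdn_mull ?logn_succ_dvd_size_divisors ?Tstar_gt0.
have n_pfactor : n = p ^ a.
  by apply: count_unitary_le2_pfactor; rewrite // -/u u_eq2.
have M_eq : M = n by apply: (@expIn 2); rewrite // M_sqr u_eq2.
exists p; split => //; rewrite n_pfactor; congr (p ^ _).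
move: count_size; rewrite u_eq2 M_eq n_pfactor size_divisors_pfactor // expnS.
by move/eqP; rewrite eqn_pmul2l // => /eqP <-; rewrite subn1.
Qed.
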